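(* Let $\mathcal{C}$ be a finite or countable alphabet with letter probabilities $(p_\alpha)_{\alpha\in\mathcal{C}}$, $0<p_\alpha<1$, $\sum_\alpha p_\alpha=1$, and let $\mathbb{P}$ be the product measure with these identically distributed marginals. Then for every $n\ge2$, $\mathbb{P}\Big(\bigcup_{j=1}^{\lceil n/2\rceil}B_n(j)\Big)=\mathbb{P}\Big(\bigcup_{j=\lfloor n/2\rfloor}^{n-1}R_n(j)\Big)\le\frac{n}{2}\,m_2^{\lfloor n/2\rfloor}$.
   Context: $\mathbb{P}(x_1^n)=\prod_{i=1}^n p_{x_i}$; $x_a^b=(x_a,\dots,x_b)$; $m_2=\sum_\alpha p_\alpha^2$. For $1\le j\le n-1$, $R_n(j)=\{x_1^n\in\mathcal{C}^n: x_1^j=x_{n-j+1}^n\}$, and $B_n(j)$ is the set of strings $x_1^n\in\mathcal{C}^n$ that are obtained by repeating the block $x_1^j$: writing $n=j\lfloor n/j\rfloor+r$ with $0\le r<j$, $x_1^n=(x_1^j,x_1^j,\dots,x_1^j,x_1^r)$ with $\lfloor n/j\rfloor$ copies of $x_1^j$ (equivalently $x_{i+j}=x_i$ for all $1\le i\le n-j$). *)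

From HB Require Import structures.
From mathcomp Require Import all_boot all_order all_algebra.
From mathcomp Require Import all_classical all_reals all_analysis.
Set Implicit Arguments. Unset Strict Implicit. Unset Printing Implicit Defensive.
Import Order.TTheory GRing.Theory Num.Theory.
Local Open Scope classical_set_scope.
Local Open Scope ring_scope.

(* Strings x_1^n are n.-tuples over a countable (finite or infinite) alphabet C;
   positions are 0-indexed: x_{i+1} = tnth x i. *)

Definition Prob {R : realType} {C : countType} (p : C -> R) (n : nat)
  (A : set (n.-tuple C)) : \bar R :=
  (\esum_(x in A) (\prod_(i < n) p (tnth x i))%:E)%E.

Definition m2 {R : realType} {C : countType} (p : C -> R) : R :=
  fine (\esum_(a in [set: C]) ((p a) ^+ 2)%:E)%E.

(* R_n(j) = { x : x_1^j = x_{n-j+1}^n } *)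
Definition Rset {C : countType} (n j : nat) : set (n.-tuple C) :=
  [set x | forall (i k : 'I_n), (i < j)%N -> (k : nat) = (n - j + i)%N ->
           tnth x i = tnth x k].

(* B_n(j) = { x : x_{i+j} = x_i for all 1 <= i <= n-j } *)
Definition Bset {C : countType} (n j : nat) : set (n.-tuple C) :=
  [set x | forall (i k : 'I_n), (k : nat) = (i + j)%N -> tnth x i = tnth x k].

Arguments Rset {C} n j _.
Arguments Bset {C} n j _.
Arguments Prob {R C} p n A.

From HB Require Import structures.
From mathcomp Require Import all_boot all_order all_algebra.
From mathcomp Require Import all_classical all_reals all_analysis.
From mathcomp Require Import zify.
Import Order.TTheory GRing.Theory Num.Theory.
Local Open Scope classical_set_scope.
Local Open Scope ring_scope.

(* R_n(j) = B_n(n - j), and j ranges over [n/2, n-1] exactly when n - j ranges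
   over [1, ceil(n/2)], which gives the equality.  For the bound, when n is odd
   B_n(1) is contained in B_n(2), so the union involves at most floor(n/2) sets
   B_n(d) with n - d >= floor(n/2).  A string of B_n(d) is determined by its first
   d letters, and with m = min(d, n - d) each of the first m letters occurs at
   least twice.  Bounding the repeated factors by p_a^2 and the remaining surplus
   factors by sqrt(m_2) >= p_a, the sum over the first d letters factorizes and
   gives P(B_n(d)) <= m_2^m sqrt(m_2)^(n-d-m) <= m_2^(floor(n/2)). *)

Section esum_nonneg.
Context {R : realType} {T : choiceType}.
Implicit Types (A B I : set T) (g : T -> \bar R).

Lemma le_esum_subset A B g : (forall x, 0 <= g x)%E -> A `<=` B ->
  (\esum_(x in A) g x <= \esum_(x in B) g x)%E.
Proof.
move=> g0 AB; rewrite [X in (_ <= X)%E](esumID A) // setIidr //.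
by rewrite leeDl // esum_ge0.
Qed.

Lemma esum_setU_le A B g : (forall x, 0 <= g x)%E ->
  (\esum_(x in A `|` B) g x <= \esum_(x in A) g x + \esum_(x in B) g x)%E.
Proof.
move=> g0; rewrite esum_mkcond (esum_mkcond A) (esum_mkcond B) -esumD; last 2 first.
- by move=> x _; case: ifP.
- by move=> x _; case: ifP.
apply: le_esum => x _; rewrite in_setU.
by case: (x \in A); case: (x \in B); rewrite /= ?adde0 ?add0e ?leeDl ?g0.
Qed.

Lemma esumZl I g (r : R) : 0 <= r -> (forall x, 0 <= g x)%E ->
  (\esum_(x in I) (r%:E * g x) = r%:E * \esum_(x in I) g x)%E.
Proof.
move=> r0 g0; rewrite /esum -ereal_supZl //; last first.
  by apply/set0P; exists 0%E, set0; rewrite ?fsbig_set0 //; exact: fsets_set0.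
rewrite image_comp; congr ereal_sup; apply: eq_imagel => X _ /=.
by rewrite ge0_mule_fsumr.
Qed.

Lemma esum_bigcup_nat_le (F : nat -> set T) g (a b : nat) :
  (forall x, 0 <= g x)%E ->
  (\esum_(x in \bigcup_(i in [set i | (a <= i < b)%N]) F i) g x
     <= \sum_(a <= i < b) \esum_(x in F i) g x)%E.
Proof.
move=> g0; elim: b => [|b IH].
  by rewrite big_geq // bigcup0 ?esum_set0 // => i /= ?; exfalso; lia.
have [ab|ba] := leqP a b; last first.
  by rewrite big_geq // bigcup0 ?esum_set0 // => i /= ?; exfalso; lia.
rewrite big_nat_recr // (_ : [set i | _] = b |` [set i | (a <= i < b)%N]).
  rewrite bigcup_setU1 setUC.
  exact: le_trans (esum_setU_le _ _ _ g0) (leeD IH (lexx _)).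
apply/seteqP; split => i /=.
- by have [->|] := eqVneq i b; [left | move=> ? ?; right; lia].
- by case=> [->|/=]; lia.
Qed.

End esum_nonneg.

Lemma esum_tuple_prod_le {R : realType} {C : countType} (d : nat)
    (f : nat -> C -> R) (b : nat -> R) :
  (forall i a, 0 <= f i a) ->
  (forall i, (i < d)%N -> (\esum_(a in [set: C]) (f i a)%:E <= (b i)%:E)%E) ->
  (\esum_(y in [set: d.-tuple C]) (\prod_(i < d) f i (tnth y i))%:E
     <= (\prod_(i < d) b i)%:E)%E.
Proof.
elim: d f b => [|d IH] f b f0 hb.
  rewrite (_ : [set: 0.-tuple C] = [set [tuple]]); last first.
    by apply/seteqP; split => y // _; rewrite /= [y]tuple0.
  by rewrite esum_set1 !big_ord0.
have B0 : 0 <= \prod_(i < d) b i.+1.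
  apply: prodr_ge0 => i _; rewrite -lee_fin (le_trans _ (hb i.+1 _)) ?ltnS //.
  by rewrite esum_ge0 // => a _; rewrite lee_fin.
rewrite (reindex_esum ([set: C] `*`` (fun _ => [set: d.-tuple C])) _
           (fun z => cons_tuple z.1 z.2)); last first.
  split=> [z _ //|[a y] [a' y'] _ _ /= /(congr1 val) [-> /val_inj -> //]|].
  move=> [[|a s] hs] _ //=; exists (a, behead_tuple (Tuple hs)) => //=.
  exact: val_inj.
rewrite -(esum_esum (a := fun a (y : d.-tuple C) =>
  (\prod_(i < d.+1) f i (tnth (cons_tuple a y) i))%:E)); last first.
  by move=> a y _ _; rewrite lee_fin prodr_ge0.
rewrite big_ord_recl EFinM.
apply: le_trans (_ : (\esum_(a in [set: C]) ((f 0%N a)%:E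
    * (\prod_(i < d) b i.+1)%:E) <= _)%E); last first.
  under eq_esum => a _ do rewrite muleC.
  rewrite esumZl // => [|a]; last by rewrite lee_fin.
  by rewrite muleC lee_wpmul2r ?lee_fin // hb.
apply: le_esum => a _.
rewrite (eq_esum (b := fun y => ((f 0%N a)%:E
    * (\prod_(i < d) f i.+1 (tnth y i))%:E)%E)); last first.
  move=> y _; rewrite big_ord_recl EFinM; congr (_%:E * _%:E)%E.
  by apply: eq_bigr => i _; rewrite !(tnth_nth a).
rewrite esumZl ?lee_wpmul2l ?lee_fin //; last by move=> y; rewrite lee_fin prodr_ge0.
apply: (IH (fun i => f i.+1) (fun i => b i.+1)) => // i id.
exact: hb.
Qed.

Lemma prod_periodic_le {R : numDomainType} (F : nat -> R) (s : R) (n d m : nat) :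
  (forall i, 0 <= F i <= s) -> (m <= d)%N -> (d + m <= n)%N ->
  (forall i, (i < m)%N -> F (d + i)%N = F i) ->
  \prod_(0 <= i < n) F i
    <= (\prod_(0 <= i < m) F i) ^+ 2 * \prod_(m <= i < d) F i * s ^+ (n - (d + m)).
Proof.
move=> Fs md dmn Fper.
have F0 i : 0 <= F i by case/andP: (Fs i).
rewrite (big_cat_nat (leq0n d) (leq_trans (leq_addr m d) dmn)) /=.
rewrite (big_cat_nat (leq_addr m d) dmn) (big_cat_nat (leq0n m) md) /=.
have -> : \prod_(d <= i < d + m) F i = \prod_(0 <= i < m) F i.
  rewrite -{1}[d]add0n big_addn addKn.
  by apply: eq_big_nat => i /andP[_ im]; rewrite addnC Fper.
rewrite expr2 mulrA -[_ * _ * \prod_(0 <= i < m) F i]mulrA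
  [_ * \prod_(0 <= i < m) F i]mulrC !mulrA.
apply: ler_wpM2l; first by rewrite !mulr_ge0 // prodr_ge0.
rewrite -prodr_const_nat; apply: ler_prod => i _.
exact: Fs.
Qed.

Section periodic_strings.
Context {C : countType}.

Lemma BsetP {n d} {x : n.-tuple C} x0 :
  Bset n d x <-> forall i, (i + d < n)%N -> nth x0 x (i + d) = nth x0 x i.
Proof.
split=> [hx i idn|hx i k ik].
- have i_lt_n : (i < n)%N by lia.
  by have := hx (Ordinal i_lt_n) (Ordinal idn) erefl; rewrite !(tnth_nth x0).
- by rewrite !(tnth_nth x0) ik hx // -ik.
Qed.

Lemma Bset_nth_mod {n d} {x : n.-tuple C} x0 k : (0 < d)%N -> Bset n d x ->
  (k < n)%N -> nth x0 x k = nth x0 x (k %% d).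
Proof.
move=> d_gt0 /(BsetP x0) hx; elim/ltn_ind: k => k IHk kn.
have [kd|dk] := ltnP k d; first by rewrite modn_small.
rewrite -{1}(subnK dk) hx ?subnK // IHk; [|lia|lia].
by rewrite -[in RHS](subnK dk) modnDr.
Qed.

Lemma Bset_subset_mul n d k : Bset n d `<=` @Bset C n (k * d).
Proof.
have [->|d_gt0] := posnP d; first by rewrite muln0.
move=> x hx; case: n x hx => [|n] x hx; first by move=> [].
apply/(BsetP (tnth x ord0)) => i ikd.
rewrite (Bset_nth_mod _ (i + k * d) d_gt0 hx ikd) (Bset_nth_mod _ i d_gt0 hx) //.
  by rewrite addnC modnMDl.
by lia.
Qed.

Lemma Bset_prefix_inj n d (dn : (d <= n)%N) : (0 < d)%N ->
  set_inj (Bset n d) (fun x : n.-tuple C => [tuple tnth x (widen_ord dn i) | i < d]).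
Proof.
move=> d_gt0 x x' /[!inE] hx hx' eq_pre.
have n_gt0 : (0 < n)%N by lia.
pose x0 := tnth x (Ordinal n_gt0).
apply: val_inj; apply: (@eq_from_nth _ x0) => [|k]; first by rewrite !size_tuple.
rewrite size_tuple => kn.
rewrite (Bset_nth_mod x0 _ d_gt0 hx kn) (Bset_nth_mod x0 _ d_gt0 hx' kn).
have kd : (k %% d < d)%N by rewrite ltn_pmod.
have := congr1 (fun y => tnth y (Ordinal kd)) eq_pre.
by rewrite /= !tnth_mktuple !(tnth_nth x0).
Qed.

Lemma Rset_Bset n j : (j <= n)%N -> @Rset C n j = Bset n (n - j).
Proof.
move=> jn; apply/seteqP; split => x hx i k hk.
- by apply: hx; move: (ltn_ord k); lia.
- by move=> ik; apply: hx; lia.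
Qed.

Lemma bigcup_Bset_Rset n : (0 < n)%N ->
  \bigcup_(j in [set j : nat | (1 <= j <= uphalf n)%N]) Bset n j
    = \bigcup_(j in [set j : nat | (n./2 <= j <= n.-1)%N]) @Rset C n j.
Proof.
move=> n_gt0; have := odd_double_half n; have := uphalf_half n; rewrite -muln2.
move=> uphalfE nE; apply/seteqP; split => x [j /= hj hx].
- exists (n - j)%N; first by rewrite /=; lia.
  by rewrite Rset_Bset ?leq_subr // subKn //; lia.
- exists (n - j)%N; first by rewrite /=; lia.
  by rewrite -Rset_Bset //; lia.
Qed.

Lemma bigcup_Bset_odd_subset n : (2 <= n)%N ->
  \bigcup_(j in [set j : nat | (1 <= j <= uphalf n)%N]) Bset n j
    `<=` \bigcup_(j in [set j : nat | ((odd n).+1 <= j < (uphalf n).+1)%N]) @Bset C n j.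
Proof.
move=> n_ge2; have := odd_double_half n; have := uphalf_half n; rewrite -muln2.
move=> uphalfE nE x [j /= hj hx].
have [j1|j_ne1] := eqVneq j 1%N; last by exists j => //=; lia.
case: (boolP (odd n)) => n_odd; last by exists j => //=; lia.
exists 2%N; first by move: uphalfE nE; rewrite /= n_odd; lia.
by rewrite j1 in hx; exact: (Bset_subset_mul n 1 2).
Qed.

End periodic_strings.

Section product_measure.
Context {R : realType} {C : countType} {p : C -> R}.
Hypothesis p_ge0 : forall a, 0 <= p a.
Hypothesis p_sum1 : (\esum_(a in [set: C]) (p a)%:E)%E = 1%E.

Lemma p_le1 a : p a <= 1.
Proof.
rewrite -lee_fin -p_sum1; apply: esum_ge; exists [set a].
  by split => //; exact: finite_set1.
by rewrite fsbig_set1.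
Qed.

Lemma esum_sqr_le1 : (\esum_(a in [set: C]) (p a ^+ 2)%:E <= 1)%E.
Proof.
rewrite -p_sum1; apply: le_esum => a _.
by rewrite lee_fin expr2 ler_piMl ?p_le1.
Qed.

Lemma m2E : (\esum_(a in [set: C]) (p a ^+ 2)%:E)%E = (m2 p)%:E.
Proof.
rewrite /m2 fineK // ge0_fin_numE ?(le_lt_trans esum_sqr_le1) ?ltry //.
by apply: esum_ge0 => a _; rewrite lee_fin sqr_ge0.
Qed.

Lemma m2_ge0 : 0 <= m2 p.
Proof. by rewrite -lee_fin -m2E esum_ge0 // => a _; rewrite lee_fin sqr_ge0. Qed.

Lemma m2_le1 : m2 p <= 1.
Proof. by rewrite -lee_fin -m2E esum_sqr_le1. Qed.

Lemma le_sqrt_m2 a : p a <= Num.sqrt (m2 p).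
Proof.
rewrite -(ger0_norm (p_ge0 a)) -sqrtr_sqr ler_wsqrtr // -lee_fin -m2E.
apply: esum_ge; exists [set a]; first by split => //; exact: finite_set1.
by rewrite fsbig_set1.
Qed.

Lemma esum_prod_sqr_le d m : (m <= d)%N ->
  (\esum_(y in [set: d.-tuple C])
     (\prod_(i < d) p (tnth y i) ^+ (if (i < m)%N then 2 else 1))%:E
   <= (m2 p ^+ m)%:E)%E.
Proof.
move=> md.
apply: le_trans (esum_tuple_prod_le d (fun i a => p a ^+ (if (i < m)%N then 2 else 1))
  (fun i => if (i < m)%N then m2 p else 1) _ _) _.
- by move=> i a; rewrite exprn_ge0.
- move=> i _; case: ifP => _; first by rewrite m2E.
  by under eq_esum do rewrite expr1; rewrite p_sum1.
rewrite lee_fin -(subnKC md) big_split_ord /=.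
rewrite (eq_bigr (fun=> m2 p)) => [|i _]; last by rewrite ltn_ord.
rewrite prodr_const card_ord big1 ?mulr1 // => i _.
by rewrite ltnNge leq_addr.
Qed.

Lemma Bset_weight_le {n d} (dn : (d <= n)%N) {x : n.-tuple C} : (0 < d)%N ->
  Bset n d x ->
  \prod_(i < n) p (tnth x i)
    <= (\prod_(i < d) p (tnth x (widen_ord dn i))
          ^+ (if (i < minn d (n - d))%N then 2 else 1))
       * Num.sqrt (m2 p) ^+ (n - (d + minn d (n - d))).
Proof.
move=> d_gt0 hx; set m := minn d (n - d).
have md : (m <= d)%N by rewrite geq_minl.
have n_gt0 : (0 < n)%N by lia.
pose x0 := tnth x (Ordinal n_gt0).
pose F i := p (nth x0 x i).
have -> : \prod_(i < n) p (tnth x i) = \prod_(0 <= i < n) F i.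
  by rewrite big_mkord; apply: eq_bigr => i _; rewrite (tnth_nth x0).
have -> : \prod_(i < d) p (tnth x (widen_ord dn i)) ^+ (if (i < m)%N then 2 else 1)
    = (\prod_(0 <= i < m) F i) ^+ 2 * \prod_(m <= i < d) F i.
  transitivity (\prod_(0 <= i < d) F i ^+ (if (i < m)%N then 2 else 1)).
    by rewrite big_mkord; apply: eq_bigr => i _; rewrite (tnth_nth x0).
  rewrite (big_cat_nat (leq0n m) md) /= -prodrXl.
  congr (_ * _); apply: eq_big_nat => i /andP[mi id].
    by rewrite id.
  by rewrite ltnNge mi.
apply: prod_periodic_le => //.
- by move=> i; rewrite p_ge0 le_sqrt_m2.
- by rewrite /m; lia.
- move=> i im; rewrite /F addnC; move/(BsetP x0): hx => hx.
  by rewrite hx //; move: im; rewrite /m; lia.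
Qed.

Lemma Prob_Bset_le n d : (0 < d <= uphalf n)%N ->
  (Prob p n (Bset n d) <= (m2 p ^+ n./2)%:E)%E.
Proof.
move=> /andP[d_gt0 d_half].
have n_split : n = (odd n + n./2 * 2)%N by rewrite muln2 odd_double_half.
have dn : (d <= n)%N by move: d_half; rewrite uphalf_half; lia.
set m := minn d (n - d); set s := Num.sqrt (m2 p); set K := s ^+ (n - (d + m)).
pose pre (x : n.-tuple C) := [tuple tnth x (widen_ord dn i) | i < d].
pose G (y : d.-tuple C) := \prod_(i < d) p (tnth y i) ^+ (if (i < m)%N then 2 else 1).
have G0 y : 0 <= G y by rewrite prodr_ge0 // => i _; rewrite exprn_ge0.
have K0 : 0 <= K by rewrite exprn_ge0 // sqrtr_ge0.
apply: (@le_trans _ _ (\esum_(x in Bset n d) (G (pre x) * K)%:E)%E).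
  apply: le_esum => x hx; rewrite lee_fin.
  have -> : G (pre x)
      = \prod_(i < d) p (tnth x (widen_ord dn i)) ^+ (if (i < m)%N then 2 else 1).
    by apply: eq_bigr => i _; rewrite tnth_mktuple.
  exact: Bset_weight_le.
rewrite -(esum_image _ pre (fun y => (G y * K)%:E)); last exact: Bset_prefix_inj.
apply: (@le_trans _ _ (\esum_(y in [set: d.-tuple C]) (G y * K)%:E)%E).
  by apply: le_esum_subset => // y; rewrite lee_fin mulr_ge0.
under eq_esum do rewrite mulrC EFinM.
rewrite esumZl //.
apply: le_trans (lee_wpmul2l _ (esum_prod_sqr_le d m (geq_minl _ _))) _.
  by rewrite lee_fin.
rewrite -EFinM lee_fin /K -(sqr_sqrtr m2_ge0) -!exprM -exprD.
apply: ler_wiXn2l; [exact: sqrtr_ge0 | by rewrite -sqrtr1 ler_wsqrtr // m2_le1 |].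
by move: d_half; rewrite uphalf_half /m; lia.
Qed.

Lemma Prob_bigcup_Bset_le n : (2 <= n)%N ->
  (Prob p n (\bigcup_(j in [set j : nat | (1 <= j <= uphalf n)%N]) Bset n j)
    <= (n./2%:R * m2 p ^+ n./2)%:E)%E.
Proof.
move=> n_ge2.
have weight_ge0 (x : n.-tuple C) : (0 <= (\prod_(i < n) p (tnth x i))%:E)%E.
  by rewrite lee_fin prodr_ge0.
rewrite /Prob.
apply: le_trans (le_esum_subset _ _ _ weight_ge0 (bigcup_Bset_odd_subset _ n_ge2)) _.
apply: le_trans (esum_bigcup_nat_le _ _ _ _ weight_ge0) _.
apply: (@le_trans _ _
  (\sum_((odd n).+1 <= j < (uphalf n).+1) (m2 p ^+ n./2)%:E)%E).
  rewrite big_nat_cond [X in (_ <= X)%E]big_nat_cond.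
  apply: lee_sum => j /andP[/andP[j_gt j_le] _]; apply: Prob_Bset_le.
  by apply/andP; split; [exact: leq_ltn_trans j_gt | rewrite -ltnS].
rewrite sumEFin lee_fin sumr_const_nat mulr_natl.
by rewrite (_ : (uphalf n).+1 - (odd n).+1 = n./2)%N // subSS uphalf_half addKn.
Qed.

End product_measure.

Theorem lemma4 (R : realType) (C : countType) (p : C -> R)
  (hp : forall a, 0 < p a < 1)
  (hsum : (\esum_(a in [set: C]) (p a)%:E)%E = 1%E)
  (n : nat) (hn : (2 <= n)%N) :
  Prob p n (\bigcup_(j in [set j : nat | (1 <= j <= uphalf n)%N]) Bset n j)
    = Prob p n (\bigcup_(j in [set j : nat | (n./2 <= j <= n.-1)%N]) Rset n j)
  /\ (Prob p n (\bigcup_(j in [set j : nat | (n./2 <= j <= n.-1)%N]) Rset n j)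
       <= ((n%:R / 2) * m2 p ^+ n./2)%:E)%E.
Proof.
have p_ge0 a : 0 <= p a by case/andP: (hp a) => /ltW.
rewrite -bigcup_Bset_Rset; last exact: leq_trans hn.
split=> //; apply: le_trans (Prob_bigcup_Bset_le p_ge0 hsum n hn) _.
rewrite lee_fin ler_wpM2r ?exprn_ge0 ?m2_ge0 // ler_pdivlMr // -natrM ler_nat.
by rewrite -[X in (_ <= X)%N](odd_double_half n) -muln2 leq_addl.
Qed.
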